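(* The following bounds are sharp: for $d,j\in\mathbb{N}$ and $g\in\mathbb{C}[z]$ of degree $d$ with only isolated critical points, (1) the number of distinct critical points of $g$ of multiplicity $j$ is at most $\lfloor\frac{d-1}{j}\rfloor$, and (2) the number of distinct critical points of $g$ of multiplicity $j$ with a common critical value is at most $\lfloor\frac{d}{j+1}\rfloor$. That is, for all $d,j\in\mathbb{N}$ with $d>j$ there exists a polynomial of degree $d$ attaining the bound in (1), and there exists a polynomial of degree $d$ attaining the bound in (2).
   Context: A point $z_0\in\mathbb{C}$ is a critical point of multiplicity $j$ of $g\in\mathbb{C}[z]$ if $g^{(1)}(z_0)=\dots=g^{(j)}(z_0)=0$; $g(z_0)$ is its critical value. *)

From HB Require Import structures.
From mathcomp Require Import all_boot all_order all_algebra.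
From mathcomp Require Import complex.
From mathcomp Require Import reals.
Set Implicit Arguments. Unset Strict Implicit. Unset Printing Implicit Defensive.
Import Order.TTheory GRing.Theory Num.Theory.
Local Open Scope ring_scope.

Definition crit_mult (C : nzRingType) (g : {poly C}) (j : nat) (z0 : C) : Prop :=
  forall i : nat, (1 <= i <= j)%N -> (g^`(i)).[z0] = 0.

From HB Require Import structures.
From mathcomp Require Import all_boot all_order all_algebra.
From mathcomp Require Import complex.
From mathcomp Require Import reals.
From mathcomp Require Import zify.
Import GRing.Theory Num.Theory.
Local Open Scope ring_scope.

(* For (1), take g with g' = X^r * prod_(a in S) (X - a)^j, where S = {0, ..., m-1},
   m = (d-1) div j and r = (d-1) mod j: the zeros of g' are exactly the points of S, each of
   order at least j, and deg g = m j + r + 1 = d.  For (2), take g = X^r * prod_(a in S) (X - a)^(j+1)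
   with m = d div (j+1) and r = d mod (j+1): the points of S are critical of multiplicity j with
   critical value 0, and they are all the zeros of g.  Since 0 lies in S, the padding factor X^r
   raises the degree without creating new critical points. *)

Section HigherRoots.
Local Set Implicit Arguments. Local Unset Strict Implicit.
Variable R : comNzRingType.
Implicit Types (z : R) (q : {poly R}).

Lemma deriv_XsubC_expS_mul z k q :
  (('X - z%:P) ^+ k.+1 * q)^`() =
  ('X - z%:P) ^+ k * (q *+ k.+1 + ('X - z%:P) * q^`()).
Proof.
rewrite derivM deriv_exp derivXsubC mul1r /= exprS mulrDr mulrA.
by rewrite mulrnAl mulrnAr (mulrC ('X - z%:P)).
Qed.

Lemma derivn_XsubC_exp_mul z n i q : (i <= n)%N ->
  exists q', (('X - z%:P) ^+ n * q)^`(i) = ('X - z%:P) ^+ (n - i) * q'.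
Proof.
elim: i => [|i IHi] lt_in; rewrite ?derivnS; first by exists q; rewrite derivn0 subn0.
have [q' ->] := IHi (ltnW lt_in).
by rewrite -(subnSK lt_in) deriv_XsubC_expS_mul; eexists.
Qed.

Lemma root_derivn_XsubC_exp_mul z n i q : (i < n)%N ->
  root ((('X - z%:P) ^+ n * q)^`(i)) z.
Proof.
move=> lt_in; have [q' ->] := derivn_XsubC_exp_mul z q (ltnW lt_in).
by rewrite rootE hornerM horner_exp hornerXsubC subrr -(subnSK lt_in) exprS !mul0r.
Qed.

Lemma crit_mult_XsubC_exp_mul z n j q : (j < n)%N ->
  crit_mult (('X - z%:P) ^+ n * q) j z.
Proof.
move=> lt_jn i /andP[_ le_ij]; apply/eqP.
exact: root_derivn_XsubC_exp_mul (leq_ltn_trans le_ij lt_jn).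
Qed.

Lemma crit_mult_deriv_XsubC_exp_mul (g : {poly R}) z j q :
  g^`() = ('X - z%:P) ^+ j * q -> crit_mult g j z.
Proof.
move=> dg [//|i] /andP[_ lt_ij]; rewrite derivSn dg; apply/eqP.
exact: root_derivn_XsubC_exp_mul.
Qed.

End HigherRoots.

Section PrescribedRoots.
Local Set Implicit Arguments. Local Unset Strict Implicit.
Variable R : idomainType.
Implicit Types (s : seq R) (z : R).

Definition pow_prod_XsubC s e r : {poly R} :=
  (\prod_(a <- s) ('X - a%:P)) ^+ e * 'X^r.

Lemma size_pow_prod_XsubC s e r :
  size (pow_prod_XsubC s e r) = (size s * e + r).+1.
Proof.
have monic_pe : (\prod_(a <- s) ('X - a%:P)) ^+ e \is monic.
  by rewrite monic_exp // monic_prod_XsubC.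
rewrite size_monicM ?monic_neq0 ?monicXn // size_polyXn addnS /=.
by rewrite polySpred ?monic_neq0 // size_exp size_prod_XsubC addSn.
Qed.

Lemma root_pow_prod_XsubC s e r z : (0 < e)%N -> 0 \in s ->
  root (pow_prod_XsubC s e r) z = (z \in s).
Proof.
move=> e_gt0 s0; rewrite rootM !rootE horner_exp hornerXn !expf_eq0 e_gt0.
rewrite -rootE root_prod_XsubC /=.
by case: eqP => [->|_]; rewrite ?s0 ?andbF ?orbF.
Qed.

Lemma pow_prod_XsubC_factor s e r z : z \in s ->
  exists q, pow_prod_XsubC s e r = ('X - z%:P) ^+ e * q.
Proof.
by move=> zs; rewrite /pow_prod_XsubC (big_rem z zs) exprMn -mulrA; eexists.
Qed.

End PrescribedRoots.

Section CharacteristicZero.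
Local Set Implicit Arguments. Local Unset Strict Implicit.
Variable F : fieldType.
Hypothesis F0 : [pchar F] =i pred0.

Let natr_eq0 (n : nat) : (n%:R == 0 :> F) = (n == 0)%N.
Proof. by move: n; apply/pcharf0P. Qed.

Lemma pchar0_natr_inj : injective (fun n : nat => n%:R : F).
Proof.
move=> m n; wlog le_mn : m n / (m <= n)%N => [hw|].
  by case/orP: (leq_total m n) => /hw // + /esym => /[apply].
move/eqP; rewrite eq_sym -subr_eq0 -natrB // natr_eq0 subn_eq0 => le_nm.
by apply/eqP; rewrite eqn_leq le_mn.
Qed.

Definition antideriv (p : {poly F}) : {poly F} :=
  \poly_(i < (size p).+1) (if i is k.+1 then p`_k / k.+1%:R else 0).

Lemma deriv_antideriv p : (antideriv p)^`() = p.
Proof.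
apply/polyP => i; rewrite coef_deriv coef_poly ltnS.
case: ltnP => [_|le_pi]; last by rewrite nth_default // mul0rn.
by rewrite -[LHS]mulr_natr divfK // natr_eq0.
Qed.

Lemma size_antideriv p : p != 0 -> size (antideriv p) = (size p).+1.
Proof.
move=> p_neq0; rewrite size_poly_eq // (polySpred p_neq0) /=.
by rewrite mulf_neq0 ?invr_eq0 ?natr_eq0 // -lead_coefE lead_coef_eq0.
Qed.

Definition nat_points m : seq F := [seq i%:R | i <- iota 0 m].

Lemma nat_points_uniq m : uniq (nat_points m).
Proof. by rewrite map_inj_uniq ?iota_uniq //; exact: pchar0_natr_inj. Qed.

Lemma size_nat_points m : size (nat_points m) = m.
Proof. by rewrite size_map size_iota. Qed.

Lemma mem0_nat_points m : (0 < m)%N -> 0 \in nat_points m.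
Proof. by case: m => // m _; rewrite inE eqxx. Qed.

Lemma crit_count_sharp d j : (0 < j)%N -> (j < d)%N ->
  exists g : {poly F}, size g = d.+1 /\
    exists s : seq F, [/\ uniq s, size s = ((d - 1) %/ j)%N &
      forall z, crit_mult g j z <-> z \in s].
Proof.
move=> j_gt0 lt_jd; set m := ((d - 1) %/ j)%N; set r := ((d - 1) %% j)%N.
have m_gt0 : (0 < m)%N by rewrite divn_gt0 //; lia.
have size_g : (m * j + r).+1 = d by rewrite /m /r -divn_eq; lia.
exists (antideriv (pow_prod_XsubC (nat_points m) j r)); split.
  rewrite size_antideriv -?size_poly_eq0 size_pow_prod_XsubC size_nat_points //.
  by rewrite size_g.
exists (nat_points m); split; [exact: nat_points_uniq | exact: size_nat_points |].
move=> z; split => [crit_z | zs].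
- rewrite -(root_pow_prod_XsubC r z j_gt0 (mem0_nat_points m_gt0)).
  by apply/rootP; have := crit_z 1%N; rewrite j_gt0 derivn1 deriv_antideriv; apply.
- have [q g'E] := pow_prod_XsubC_factor j r zs.
  by apply: (crit_mult_deriv_XsubC_exp_mul (q := q)); rewrite deriv_antideriv.
Qed.

Lemma crit_value_count_sharp d j : (j < d)%N ->
  exists g : {poly F}, size g = d.+1 /\
    exists (c : F) (s : seq F), [/\ uniq s, size s = (d %/ j.+1)%N &
      forall z, (crit_mult g j z /\ g.[z] = c) <-> z \in s].
Proof.
move=> lt_jd; set m := (d %/ j.+1)%N; set r := (d %% j.+1)%N.
have m_gt0 : (0 < m)%N by rewrite divn_gt0.
exists (pow_prod_XsubC (nat_points m) j.+1 r); split.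
  by rewrite size_pow_prod_XsubC size_nat_points -divn_eq.
exists 0, (nat_points m); split; [exact: nat_points_uniq | exact: size_nat_points |].
move=> z; split => [[_ /rootP] | zs].
  by rewrite root_pow_prod_XsubC ?mem0_nat_points.
split; last by apply/rootP; rewrite root_pow_prod_XsubC ?mem0_nat_points.
by have [q ->] := pow_prod_XsubC_factor j.+1 r zs; exact: crit_mult_XsubC_exp_mul.
Qed.

End CharacteristicZero.

Theorem mainTheorem5 (R : realType) (d j : nat) :
  (0 < j)%N -> (j < d)%N ->
  (* (1) sharpness of floor((d-1)/j) *)
  (exists g : {poly R[i]}, size g = d.+1 /\
     exists s : seq R[i], [/\ uniq s, size s = ((d - 1) %/ j)%N &
       forall z : R[i], crit_mult g j z <-> z \in s])
  /\
  (* (2) sharpness of floor(d/(j+1)) *)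
  (exists g : {poly R[i]}, size g = d.+1 /\
     exists (c : R[i]) (s : seq R[i]), [/\ uniq s, size s = (d %/ j.+1)%N &
       forall z : R[i], (crit_mult g j z /\ g.[z] = c) <-> z \in s]).
Proof.
move=> j_gt0 lt_jd; have F0 := @pchar_num R[i].
by split; [exact: crit_count_sharp | exact: crit_value_count_sharp].
Qed.
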